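(* Let $r_0,r_1,r_2\ge 1$ and $L=\mathfrak{g}(r_0,r_1,r_2)$. Then $$b(L)=\begin{cases} r_1(r_0+r_2-r_1) & \text{if } r_1<r_0 \text{ and } r_1<r_2,\\ r_0r_2 & \text{if } r_1\ge r_0 \text{ or } r_1\ge r_2.\end{cases}$$
   Context: All Lie algebras are over an algebraically closed field $\mathbf{k}$ of characteristic zero. $\mathcal{P}(r_0,r_1,r_2)$ is the poset on $\{b_1,\dots,b_{r_0},m_1,\dots,m_{r_1},t_1,\dots,t_{r_2}\}$ whose strict relations are exactly $b_i\prec m_j$, $m_j\prec t_k$ and $b_i\prec t_k$ for all $i,j,k$. $\mathfrak{g}(r_0,r_1,r_2)$ denotes the nilpotent Lie poset algebra $\mathfrak{g}^{\prec}(\mathcal{P}(r_0,r_1,r_2))$: the Lie algebra under the commutator bracket spanned by matrix units $E_{p,q}$ with $p\prec q$. The breadth of a Lie algebra $L$ is $b(L)=\max_{x\in L}\operatorname{rank}(\mathrm{ad}_x)$, where $\mathrm{ad}_x=[x,-]$. *)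

From HB Require Import structures.
From mathcomp Require Import all_boot all_order all_algebra.
Set Implicit Arguments. Unset Strict Implicit. Unset Printing Implicit Defensive.
Import GRing.Theory.
Local Open Scope ring_scope.

(* Elements of P(r0,r1,r2) are encoded as indices 'I_(r0+r1+r2):
   indices < r0 are b_1..b_r0 (level 0), indices in [r0, r0+r1) are
   m_1..m_r1 (level 1), the remaining r2 indices are t_1..t_r2 (level 2). *)
Definition plevel (r0 r1 r2 : nat) (i : 'I_(r0 + r1 + r2)) : nat :=
  if (i < r0)%N then 0%N else if (i < r0 + r1)%N then 1%N else 2%N.

Definition pprec (r0 r1 r2 : nat) (p q : 'I_(r0 + r1 + r2)) : bool :=
  (plevel p < plevel q)%N.

Definition gpos (F : fieldType) (r0 r1 r2 : nat) : {vspace 'M[F]_(r0 + r1 + r2)} :=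
  <<[seq delta_mx pq.1 pq.2 | pq <- enum [pred pq : 'I_(r0+r1+r2) * 'I_(r0+r1+r2)
                                            | pprec pq.1 pq.2]]>>%VS.

Definition lbr (F : fieldType) (n : nat) (x y : 'M[F]_n) : 'M[F]_n :=
  x *m y - y *m x.

Definition ad_rank (F : fieldType) (n : nat) (L : {vspace 'M[F]_n}) (x : 'M[F]_n) : nat :=
  \dim (linfun (lbr x) @: L)%VS.

Definition is_breadth (F : fieldType) (n : nat) (L : {vspace 'M[F]_n}) (b : nat) : Prop :=
  (exists2 x, x \in L & ad_rank L x = b) /\ (forall x, x \in L -> (ad_rank L x <= b)%N).

From HB Require Import structures.
From mathcomp Require Import all_boot all_order all_algebra.
From mathcomp Require Import zify.
Set Implicit Arguments. Unset Strict Implicit. Unset Printing Implicit Defensive.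
Import GRing.Theory.
Local Open Scope ring_scope.

(* Write x in g = g(r0,r1,r2) in block form along the levels b < m < t of the
   poset: A_x (b x m), B_x (m x t) and C_x (b x t).  Since the poset has no chains
   other than b < m < t, the product of two elements of g is concentrated in the
   (b, t) block and the (b, t) block of [x, y] is A_x B_y - A_y B_x.  Hence
   ad_x(g) is isomorphic to the space W_x of these blocks (ad_rank_bt), and the
   breadth is r0 r2 - (r0 - r1)(r2 - r1) (truncated subtraction):
   - upper bound (ad_rank_le): U N V = 0 for N in W_x, where the rows of U span
     the left kernel of A_x and the columns of V the right kernel of B_x; these
     kernels have dimensions >= r0 - r1 and r2 - r1, and dim_sandwich_kernel
     bounds the dimension of such a space;
   - lower bound (ad_rank_witness): for x0 = sum E_(b_j, m_j) + sum E_(m_j, t_j),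
     W_x0 contains every E_(i,k) with i < r1 or k < r1 (dim_ge_off_corner).  The argument works
   over any field. *)

Section MatrixSpaces.
Variable F : fieldType.

Definition sandwich k m p l (U : 'M[F]_(k, m)) (V : 'M[F]_(p, l)) (N : 'M[F]_(m, p)) :
  'M[F]_(k, l) := U *m N *m V.

Fact sandwich_is_semilinear k m p l (U : 'M[F]_(k, m)) (V : 'M[F]_(p, l)) :
  semilinear (sandwich U V).
Proof.
split=> [c A|A B]; rewrite /sandwich; first by rewrite -scalemxAr -scalemxAl.
by rewrite mulmxDr mulmxDl.
Qed.
HB.instance Definition _ k m p l (U : 'M[F]_(k, m)) (V : 'M[F]_(p, l)) :=
  GRing.isSemilinear.Build F _ _ _ (sandwich U V) (sandwich_is_semilinear U V).

(* If U has full row rank k and V full column rank l, then N |-> U N V is onto,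
   so a space of m x p matrices annihilated by it has codimension >= k l. *)
Lemma dim_sandwich_kernel k m p l (U : 'M[F]_(k, m)) (V : 'M[F]_(p, l))
    (W : {vspace 'M[F]_(m, p)}) :
  row_free U -> row_free V^T -> (forall N, N \in W -> U *m N *m V = 0) ->
  (\dim W + k * l <= m * p)%N.
Proof.
move=> /row_freeP [U' UU'] /row_freeP [V' VV'] UWV.
pose h := linfun (sandwich U V).
have W_ker : (W <= lker h)%VS.
  by apply/subvP => N WN; rewrite memv_ker lfunE /= /sandwich UWV.
have h_onto : (fullv <= h @: fullv)%VS.
  apply/subvP => T _; apply/memv_imgP; exists (U' *m T *m V'^T); first exact: memvf.
  have V'V : V'^T *m V = 1%:M by rewrite -[V]trmxK -trmx_mul VV' trmx1.
  by rewrite lfunE /= /sandwich !mulmxA UU' mul1mx -mulmxA V'V mulmx1.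
have ker_dim : (\dim (lker h) + k * l <= m * p)%N.
  have := limg_ker_dim h fullv; rewrite capfv.
  have := dimvS h_onto; rewrite !dimvf !dim_matrix !natrME; lia.
by apply: leq_trans ker_dim; rewrite leq_add2r dimvS.
Qed.

Lemma corner_index_proof m a (i : 'I_(m - a)) : (i + a < m)%N.
Proof. by have := ltn_ord i; lia. Qed.

Definition corner m p a c (N : 'M[F]_(m, p)) : 'M[F]_(m - a, p - c) :=
  \matrix_(i, k) N (Ordinal (corner_index_proof i)) (Ordinal (corner_index_proof k)).

Fact corner_is_semilinear m p a c : semilinear (@corner m p a c).
Proof. by split=> [x A|A B]; apply/matrixP=> i k; rewrite !mxE. Qed.
HB.instance Definition _ m p a c :=
  GRing.isSemilinear.Build F _ _ _ (@corner m p a c) (@corner_is_semilinear m p a c).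

(* A space containing every matrix unit E_ik outside the lower-right
   (m - a) x (p - c) corner contains all matrices vanishing on that corner. *)
Lemma dim_ge_off_corner m p a c (W : {vspace 'M[F]_(m, p)}) :
  (forall (i : 'I_m) (k : 'I_p), (i < a)%N || (k < c)%N -> delta_mx i k \in W) ->
  (m * p - (m - a) * (p - c) <= \dim W)%N.
Proof.
move=> W_units; pose f := linfun (@corner m p a c).
have ker_W : (lker f <= W)%VS.
  apply/subvP => N; rewrite memv_ker lfunE /= => /eqP/matrixP N_corner.
  rewrite [N]matrix_sum_delta; apply: memv_suml => i _; apply: memv_suml => k _.
  have [off|in_corner] := boolP ((i < a)%N || (k < c)%N); first exact/memvZ/W_units.
  have ia : (i - a < m - a)%N by have := ltn_ord i; lia.
  have kc : (k - c < p - c)%N by have := ltn_ord k; lia.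
  have := N_corner (Ordinal ia) (Ordinal kc); rewrite !mxE.
  have -> : Ordinal (corner_index_proof (Ordinal ia)) = i by apply: val_inj => /=; lia.
  have -> : Ordinal (corner_index_proof (Ordinal kc)) = k by apply: val_inj => /=; lia.
  by move->; rewrite scale0r mem0v.
have ker_dim : (m * p - (m - a) * (p - c) <= \dim (lker f))%N.
  have := limg_ker_dim f fullv; rewrite capfv.
  have := dimvS (subvf (f @: fullv)); rewrite !dimvf !dim_matrix !natrME; lia.
by apply: leq_trans ker_dim _; rewrite dimvS.
Qed.

Lemma mulmx_delta_entry m n l (M : 'M[F]_(m, n)) (a : 'I_n) (b : 'I_l) p q :
  (M *m delta_mx a b) p q = M p a * (q == b)%:R.
Proof.
rewrite mxE (bigD1 a) //= big1 ?addr0 => [|s /negbTE sa]; rewrite mxE ?eqxx //.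
by rewrite sa mulr0.
Qed.

Lemma delta_mulmx_entry m n l (M : 'M[F]_(n, l)) (a : 'I_m) (b : 'I_n) p q :
  (delta_mx a b *m M) p q = (p == a)%:R * M b q.
Proof.
rewrite mxE (bigD1 b) //= big1 ?addr0 => [|s /negbTE sb]; rewrite mxE ?eqxx ?andbT //.
by rewrite sb andbF mul0r.
Qed.

End MatrixSpaces.

Section PosetAlgebra.
Variables (F : fieldType) (r0 r1 r2 : nat).
Local Notation n := (r0 + r1 + r2)%N.
Local Notation L := (gpos F r0 r1 r2).

Definition bot_pt (i : 'I_r0) : 'I_n := lshift r2 (lshift r1 i).
Definition mid_pt (j : 'I_r1) : 'I_n := lshift r2 (rshift r0 j).
Definition top_pt (k : 'I_r2) : 'I_n := rshift (r0 + r1) k.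

Lemma pt_cases (P : 'I_n -> Prop) :
  (forall i, P (bot_pt i)) -> (forall j, P (mid_pt j)) -> (forall k, P (top_pt k)) ->
  forall p, P p.
Proof.
move=> Pb Pm Pt p; rewrite -(splitK p); case: (split p) => [q|k]; last exact: Pt.
by rewrite -(splitK q); case: (split q) => [i|j]; [exact: Pb|exact: Pm].
Qed.

Lemma plevel_bot i : plevel (bot_pt i) = 0%N.
Proof. by rewrite /plevel /= ltn_ord. Qed.

Lemma plevel_mid j : plevel (mid_pt j) = 1%N.
Proof. by rewrite /plevel /= ltnNge leq_addr /= ltn_add2l ltn_ord. Qed.

Lemma plevel_top k : plevel (top_pt k) = 2%N.
Proof. by rewrite /plevel /= !ltnNge -addnA !leq_addr /= addnA leq_addr. Qed.

Lemma plevel_le2 (p : 'I_n) : (plevel p <= 2)%N.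
Proof. by rewrite /plevel; case: ifP => // _; case: ifP. Qed.

(* The entries of M at the non-relations of the poset; L is its kernel. *)
Definition off_support (M : 'M[F]_n) : 'M[F]_n :=
  \matrix_(p, q) (if pprec p q then 0 else M p q).

Fact off_support_is_semilinear : semilinear off_support.
Proof.
by split=> [c A|A B]; apply/matrixP=> p q; rewrite !mxE; case: ifP; rewrite ?mulr0 ?addr0.
Qed.
HB.instance Definition _ :=
  GRing.isSemilinear.Build F _ _ _ off_support off_support_is_semilinear.

Lemma delta_in_L a b : pprec a b -> delta_mx a b \in L.
Proof. by move=> ab; apply/memv_span/mapP; exists (a, b); rewrite ?mem_enum. Qed.

Lemma gposP (x : 'M[F]_n) :
  reflect (forall p q, ~~ pprec p q -> x p q = 0) (x \in L).
Proof.
apply: (iffP idP) => [xL p q npq | x_supp].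
  have L_ker : (L <= lker (linfun off_support))%VS.
    apply/span_subvP => M /mapP [[a b]]; rewrite mem_enum inE /= => ab ->.
    rewrite memv_ker lfunE /=; apply/eqP/matrixP => c d; rewrite !mxE.
    by case: ifP => // cd; case: (c =P a) => [ca|//]; case: (d =P b) => [db|//];
      rewrite -ca -db cd in ab.
  move: (subvP L_ker x xL); rewrite memv_ker lfunE /= => /eqP/matrixP/(_ p q).
  by rewrite !mxE (negbTE npq).
rewrite [x]matrix_sum_delta; apply: memv_suml => a _; apply: memv_suml => b _.
have [ab|nab] := boolP (pprec a b); last by rewrite x_supp // scale0r mem0v.
exact/memvZ/delta_in_L.
Qed.

Lemma gpos_support (x : 'M[F]_n) p q : x \in L -> x p q != 0 -> pprec p q.
Proof. by move/gposP => x_supp; apply: contraTT => /x_supp ->; rewrite eqxx. Qed.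

(* Products of elements of L only live in the (bottom, top) block, since
   P(r0,r1,r2) has no chain of length 2 other than b < m < t. *)
Lemma mulmx_gpos_outside (x y : 'M[F]_n) p q : x \in L -> y \in L ->
  ~~ ((plevel p == 0%N) && (plevel q == 2%N)) -> (x *m y) p q = 0.
Proof.
move=> xL yL pq; rewrite mxE big1 // => s _.
have [-> | xps] := eqVneq (x p s) 0; first by rewrite mul0r.
have [-> | ysq] := eqVneq (y s q) 0; first by rewrite mulr0.
move: pq (gpos_support xL xps) (gpos_support yL ysq) (plevel_le2 q); rewrite /pprec.
by case/nandP => /eqP; lia.
Qed.

Definition bm_block (x : 'M[F]_n) : 'M[F]_(r0, r1) :=
  \matrix_(i, j) x (bot_pt i) (mid_pt j).
Definition mt_block (x : 'M[F]_n) : 'M[F]_(r1, r2) :=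
  \matrix_(j, k) x (mid_pt j) (top_pt k).
Definition bt_block (x : 'M[F]_n) : 'M[F]_(r0, r2) :=
  \matrix_(i, k) x (bot_pt i) (top_pt k).

Fact bt_block_is_semilinear : semilinear bt_block.
Proof. by split=> [c A|A B]; apply/matrixP=> i k; rewrite !mxE. Qed.
HB.instance Definition _ :=
  GRing.isSemilinear.Build F _ _ _ bt_block bt_block_is_semilinear.

Lemma bt_block_delta i k : bt_block (delta_mx (bot_pt i) (top_pt k)) = delta_mx i k.
Proof. by apply/matrixP => a b; rewrite !mxE -!val_eqE /= eqn_add2l. Qed.

Lemma bt_block_mul (x y : 'M[F]_n) : x \in L -> y \in L ->
  bt_block (x *m y) = bm_block x *m mt_block y.
Proof.
move=> xL yL; apply/matrixP => i k; rewrite !mxE !big_split_ord /=.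
rewrite big1 ?add0r => [|i' _]; last first.
  have [-> | nz] := eqVneq (x (bot_pt i) (bot_pt i')) 0; first by rewrite mul0r.
  by move: (gpos_support xL nz); rewrite /pprec !plevel_bot.
rewrite [X in _ + X]big1 ?addr0 => [|k' _]; last first.
  have [-> | nz] := eqVneq (y (top_pt k') (top_pt k)) 0; first by rewrite mulr0.
  by move: (gpos_support yL nz); rewrite /pprec !plevel_top.
by apply: eq_bigr => j _; rewrite !mxE.
Qed.

Fact lbr_is_semilinear (x : 'M[F]_n) : semilinear (lbr x).
Proof.
split=> [c A|A B]; rewrite /lbr; first by rewrite -scalemxAr -scalemxAl scalerBr.
by rewrite mulmxDr mulmxDl opprD addrACA.
Qed.
HB.instance Definition _ (x : 'M[F]_n) :=
  GRing.isSemilinear.Build F _ _ _ (lbr x) (lbr_is_semilinear x).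

Lemma lbr_entry (x y : 'M[F]_n) p q : lbr x y p q = (x *m y) p q - (y *m x) p q.
Proof. by rewrite !mxE. Qed.

Lemma bt_block_lbr (x y : 'M[F]_n) : x \in L -> y \in L ->
  bt_block (lbr x y) = bm_block x *m mt_block y - bm_block y *m mt_block x.
Proof. by move=> xL yL; rewrite -!bt_block_mul // -raddfB. Qed.

Lemma lbr_eq0 (x y : 'M[F]_n) : x \in L -> y \in L ->
  bt_block (lbr x y) = 0 -> lbr x y = 0.
Proof.
move=> xL yL /matrixP bt0; apply/matrixP => p q.
have [pq | npq] := boolP ((plevel p == 0%N) && (plevel q == 2%N)); last first.
  by rewrite lbr_entry !mulmx_gpos_outside // subrr mxE.
move: p q pq; apply: pt_cases => [i|j|k] q; rewrite ?plevel_mid ?plevel_top //.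
move: q; apply: pt_cases => [i'|j|k]; rewrite ?plevel_bot ?plevel_mid // => _.
by have := bt0 i k; rewrite !mxE.
Qed.

Lemma ad_rank_bt (x : 'M[F]_n) : x \in L ->
  ad_rank L x = \dim (linfun bt_block @: (linfun (lbr x) @: L)).
Proof.
move=> xL; symmetry; apply: limg_dim_eq; apply/eqP; rewrite -subv0; apply/subvP => M.
rewrite memv_cap memv_ker => /andP [/memv_imgP [y yL ->]]; rewrite !lfunE /=.
by move=> /eqP/(lbr_eq0 xL yL) ->; rewrite mem0v.
Qed.

(* Upper bound: with U a basis of the left kernel of A_x and V of the right
   kernel of B_x, every (b, t) block A_x B_y - A_y B_x satisfies U N V = 0. *)
Lemma ad_rank_le (x : 'M[F]_n) : x \in L ->
  (ad_rank L x <= r0 * r2 - (r0 - r1) * (r2 - r1))%N.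
Proof.
move=> xL; rewrite ad_rank_bt //; set W := (_ @: _)%VS.
pose A := bm_block x; pose B := mt_block x.
pose U := row_base (kermx A); pose V := (row_base (kermx B^T))^T.
have UA : U *m A = 0.
  have /submxP [D ->] : (U <= kermx A)%MS by rewrite eq_row_base.
  by rewrite -mulmxA mulmx_ker mulmx0.
have BV : B *m V = 0.
  apply: trmx_inj; rewrite trmx_mul trmx0.
  have /submxP [D ->] : (V^T <= kermx B^T)%MS by rewrite trmxK eq_row_base.
  by rewrite -mulmxA mulmx_ker mulmx0.
have UWV N : N \in W -> U *m N *m V = 0.
  case/memv_imgP => _ /memv_imgP [y yL ->] ->; rewrite !lfunE /= bt_block_lbr //.
  by rewrite mulmxBr mulmxBl !mulmxA UA !mul0mx sub0r -!mulmxA BV !mulmx0 oppr0.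
have kerA : (r0 - r1 <= \rank (kermx A))%N.
  by rewrite mxrank_ker; have := rank_leq_col A; lia.
have kerB : (r2 - r1 <= \rank (kermx B^T))%N.
  by rewrite mxrank_ker mxrank_tr; have := rank_leq_row B; lia.
have := dim_sandwich_kernel (row_base_free _) _ UWV; rewrite trmxK row_base_free.
(* naming \dim W identifies its two elaborations, so that lia sees one atom *)
set d := \dim W; have := leq_mul kerA kerB; lia.
Qed.

(* The witness x0 = sum_(j < min(r0,r1)) E_(b_j, m_j) + sum_(j < min(r1,r2)) E_(m_j, t_j),
   described by its entries on raw indices (b_j = j, m_j = r0 + j, t_j = r0 + r1 + j). *)
Definition witness_entry (p q : nat) : bool :=
  ((p < r0)%N && (p < r1)%N && (q == r0 + p)%N)
  || ((r0 <= p < r0 + r1)%N && (q == p + r1)%N).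

Definition witness : 'M[F]_n := \matrix_(p, q) (witness_entry p q)%:R.

Lemma witness_in_L : witness \in L.
Proof.
apply/gposP => p q npq; rewrite mxE; suff -> : witness_entry p q = false by [].
move: npq; rewrite /witness_entry /pprec /plevel; have := ltn_ord q; have := ltn_ord p.
by do ![case: ifP]; lia.
Qed.

Lemma natr_bool_sub (b1 b2 b3 : bool) :
  (b1 = b3 + b2 :> nat)%N -> b1%:R - b2%:R = b3%:R :> F.
Proof. by move=> ->; rewrite natrD addrK. Qed.

Lemma lbr_witness_mid (i : 'I_r0) (j : 'I_r1) (k : 'I_r2) : i = j :> nat ->
  lbr witness (delta_mx (mid_pt j) (top_pt k)) = delta_mx (bot_pt i) (top_pt k).
Proof.
move=> ij; apply/matrixP => p q.
rewrite lbr_entry mulmx_delta_entry delta_mulmx_entry !mxE -!natrM !mulnb.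
apply: natr_bool_sub; rewrite /witness_entry -!val_eqE /= -ij.
by have := ltn_ord i; have := ltn_ord j; have := ltn_ord k; have := ltn_ord p; lia.
Qed.

Lemma lbr_witness_bot (i : 'I_r0) (j : 'I_r1) (k : 'I_r2) : j = k :> nat ->
  lbr witness (delta_mx (bot_pt i) (mid_pt j)) = - delta_mx (bot_pt i) (top_pt k).
Proof.
move=> jk; apply/matrixP => p q.
rewrite lbr_entry mulmx_delta_entry delta_mulmx_entry !mxE -!natrM !mulnb.
apply: oppr_inj; rewrite opprB opprK; apply: natr_bool_sub.
rewrite /witness_entry -!val_eqE /= jk.
by have := ltn_ord i; have := ltn_ord j; have := ltn_ord k; have := ltn_ord p; lia.
Qed.

(* Lower bound: ad_x0(L) contains E_(b_i, t_k) whenever i < r1 or k < r1. *)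
Lemma ad_rank_witness : (r0 * r2 - (r0 - r1) * (r2 - r1) <= ad_rank L witness)%N.
Proof.
rewrite ad_rank_bt ?witness_in_L //; set W := (_ @: _)%VS.
have in_W y : y \in L -> bt_block (lbr witness y) \in W.
  by move=> yL; have := memv_img (linfun bt_block) (memv_img (linfun (lbr witness)) yL);
    rewrite !lfunE.
apply: dim_ge_off_corner => i k /orP [ir1 | kr1]; rewrite -bt_block_delta.
  rewrite -(@lbr_witness_mid i (Ordinal ir1) k) //; apply/in_W/delta_in_L.
  by rewrite /pprec plevel_mid plevel_top.
rewrite -[delta_mx _ _]opprK -(@lbr_witness_bot i (Ordinal kr1) k) // raddfN memvN.
by apply/in_W/delta_in_L; rewrite /pprec plevel_bot plevel_mid.
Qed.

End PosetAlgebra.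

Lemma breadth_formula (r0 r1 r2 : nat) :
  (if (r1 < r0) && (r1 < r2) then r1 * (r0 + r2 - r1) else r0 * r2)%N
  = (r0 * r2 - (r0 - r1) * (r2 - r1))%N.
Proof.
case: ifP => [/andP [lt10 lt12] | /negbT]; first by nia.
by rewrite negb_and -!leqNgt -!subn_eq0 => /orP [] /eqP->; rewrite ?mul0n ?muln0 subn0.
Qed.

Theorem theorem6 (F : closedFieldType) (charF0 : [pchar F] =i pred0)
  (r0 r1 r2 : nat) (h0 : (0 < r0)%N) (h1 : (0 < r1)%N) (h2 : (0 < r2)%N) :
  is_breadth (gpos F r0 r1 r2)
    (if (r1 < r0)%N && (r1 < r2)%N then (r1 * (r0 + r2 - r1))%N else (r0 * r2)%N).
Proof.
rewrite breadth_formula; split=> [|x xL]; last exact: ad_rank_le.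
exists (witness F r0 r1 r2); first exact: witness_in_L.
by apply/eqP; rewrite eqn_leq ad_rank_le ?witness_in_L // ad_rank_witness.
Qed.
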